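(* Let $q>1$ and $0<u<1$. Choose $\lambda'_1=a\ge1$ with probability \[ Q(a)=\frac{\prod_{r\ge1}(1-u/q^r)\,u^{a-1}}{q^{a^2-a}(\frac uq)_a(\frac1q)_{a-1}}, \] and then define $\lambda'_2,\lambda'_3,\dots$ successively by the Markov rule that if $\lambda'_i=a$ then $\lambda'_{i+1}=b$ ($0\le b\le a$) with probability \[ K(a,b)=\frac{u^b(\frac1q)_a(\frac uq)_a}{q^{b^2}(\frac1q)_{a-b}(\frac1q)_b(\frac uq)_b}. \] Then the partition with conjugate $(\lambda'_1,\lambda'_2,\dots)$ is distributed according to $N_{u,q}$.
   Context: $(x)_i=\prod_{j=1}^i(1-x^j)$ with $(x)_0=1$; in particular $(\frac uq)_i=\prod_{j=1}^i(1-u/q^j)$. $N_{u,q}(\lambda)=\prod_{r\ge1}(1-u/q^r)\frac{u^{|\lambda|-1}(q^{\lambda'_1}-1)}{\prod_i q^{(\lambda'_i)^2}(\frac1q)_{m_i(\lambda)}}$ for partitions $\lambda$ of positive integers, where $\lambda'$ is the conjugate partition and $m_i(\lambda)$ the multiplicity of part $i$. *)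

From HB Require Import structures.
From mathcomp Require Import all_boot all_order all_algebra.
From mathcomp Require Import all_classical all_reals all_analysis.
Set Implicit Arguments. Unset Strict Implicit. Unset Printing Implicit Defensive.
Import Order.TTheory GRing.Theory Num.Theory.
Local Open Scope ring_scope.

Section Defs.
Variable R : realType.

Definition qpoch (x : R) (i : nat) : R := \prod_(1 <= j < i.+1) (1 - x ^+ j).

Definition qpochu (u q : R) (i : nat) : R := \prod_(1 <= j < i.+1) (1 - u / q ^+ j).

Definition infprod (u q : R) : R :=
  limn (fun n : nat => \prod_(1 <= r < n.+1) (1 - u / q ^+ r)).

Definition is_partition (la : seq nat) : bool :=
  sorted geq la && all (fun x => 0 < x)%N la.

Definition conjpart (la : seq nat) (i : nat) : nat := count (fun x => i <= x)%N la.

Definition conjugate (la : seq nat) : seq nat :=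
  [seq conjpart la i | i <- iota 1 (head 0%N la)].

Definition mult (la : seq nat) (i : nat) : nat := count (pred1 i) la.

Definition Nuq (u q : R) (la : seq nat) : R :=
  infprod u q * (u ^+ (sumn la).-1 * (q ^+ conjpart la 1 - 1)) /
  ((\prod_(1 <= i < (head 0%N la).+1) q ^+ (conjpart la i * conjpart la i)) *
   (\prod_(1 <= i < (head 0%N la).+1) qpoch q^-1 (mult la i))).

Definition Qinit (u q : R) (a : nat) : R :=
  infprod u q * u ^+ a.-1 /
  (q ^+ (a * a - a) * qpochu u q a * qpoch q^-1 a.-1).

Definition Ktrans (u q : R) (a b : nat) : R :=
  u ^+ b * qpoch q^-1 a * qpochu u q a /
  (q ^+ (b * b) * qpoch q^-1 (a - b) * qpoch q^-1 b * qpochu u q b).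

(* Probability that the chain produces lambda'_1 = c_1, ..., lambda'_k = c_k,
   followed by lambda'_{k+1} = 0 (and then 0 forever, since K(0,0) = 1):
   Q(c_1) * K(c_1,c_2) * ... * K(c_{k-1},c_k) * K(c_k,0). *)
Definition chain_prob (u q : R) (c : seq nat) : R :=
  match c with
  | [::] => 0
  | c1 :: _ =>
      Qinit u q c1 *
      \prod_(i < size c) Ktrans u q (nth 0%N c i) (nth 0%N c i.+1)
  end.

End Defs.

(* Write c = lambda' for the conjugate partition.  The kernel K(a,b) is a ratio
   of q-Pochhammer symbols in which (1/q)_a (u/q)_a sits in the numerator and
   (1/q)_b (u/q)_b in the denominator, so along the path c_1, c_2, ..., c_k, 0
   the product of the transitions telescopes to
   u^(c_2 + ... + c_k) (1/q)_(c_1) (u/q)_(c_1) / prod_i q^(c_(i+1)^2) (1/q)_(c_i - c_(i+1)).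
   The initial law Q(c_1) cancels the surviving (u/q)_(c_1) and turns
   (1/q)_(c_1) / (1/q)_(c_1 - 1) into (q^(c_1) - 1) / q^(c_1).  What remains is
   N_{u,q} written through lambda', because m_i(lambda) = lambda'_i - lambda'_(i+1)
   and |lambda| = lambda'_1 + lambda'_2 + .... *)

From HB Require Import structures.
From mathcomp Require Import all_boot all_order all_algebra.
From mathcomp Require Import all_classical all_reals all_analysis.
From mathcomp Require Import zify ring.
Import Order.TTheory GRing.Theory Num.Theory.
Local Open Scope ring_scope.

Lemma big_ord_recl_vanish {T : Type} {idx : T} (op : Monoid.law idx)
    (F : nat -> T) (n : nat) :
  F n = idx -> \big[op/idx]_(i < n) F i = op (F 0%N) (\big[op/idx]_(i < n) F i.+1).
Proof.
case: n => [|n] Fn; first by rewrite !big_ord0 Monoid.mulm1.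
by rewrite big_ord_recl big_ord_recr /= Fn Monoid.mulm1.
Qed.

Lemma conjpart_mult (la : seq nat) (i : nat) :
  conjpart la i = (mult la i + conjpart la i.+1)%N.
Proof.
rewrite /conjpart /mult; elim: la => //= x s ->.
by case: (ltngtP i x) => [|_|->]; rewrite ?eqxx //=; lia.
Qed.

Lemma mult_conjpart (la : seq nat) (i : nat) :
  mult la i = (conjpart la i - conjpart la i.+1)%N.
Proof. by rewrite conjpart_mult addnK. Qed.

Lemma conjpart_eq0 (la : seq nat) (j : nat) :
  all (fun x => x < j)%N la -> conjpart la j = 0%N.
Proof.
move=> /allP la_lt; apply/eqP; rewrite -leqn0 leqNgt -has_count.
by apply/hasPn => x /la_lt; rewrite -ltnNge.
Qed.

Lemma sum_ord_ltn (x k : nat) : (\sum_(i < k) (i < x))%N = minn x k.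
Proof.
elim: k => [|k IH]; first by rewrite big_ord0 minn0.
by rewrite big_ord_recr /= IH; case: (ltnP k x); lia.
Qed.

Lemma sumn_conjpart (la : seq nat) (k : nat) :
  all (fun x => x <= k)%N la -> sumn la = (\sum_(i < k) conjpart la i.+1)%N.
Proof.
elim: la => [_|x s IH /andP[x_le s_le]] /=; first by rewrite big1.
rewrite IH // /conjpart /= big_split /= sum_ord_ltn; congr (_ + _)%N; lia.
Qed.

Lemma sorted_geq_le_head (la : seq nat) :
  sorted geq la -> all (fun x => x <= head 0%N la)%N la.
Proof.
case: la => //= a s sorted_as; rewrite leqnn /=.
by apply: (order_path_min _ sorted_as) => y x z xy zx; exact: leq_trans zx xy.
Qed.

Lemma size_conjugate (la : seq nat) : size (conjugate la) = head 0%N la.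
Proof. by rewrite size_map size_iota. Qed.

Lemma nth_conjugate (la : seq nat) (i : nat) :
  sorted geq la -> nth 0%N (conjugate la) i = conjpart la i.+1.
Proof.
move=> sorted_la; case: (ltnP i (head 0%N la)) => [i_lt|head_le].
  by rewrite (nth_map 0%N) ?size_iota // nth_iota // add1n.
rewrite nth_default ?size_conjugate // conjpart_eq0 //.
apply/allP => x /(allP (sorted_geq_le_head la sorted_la)) x_le.
by rewrite ltnS (leq_trans x_le head_le).
Qed.

Lemma sumn_conjugate (la : seq nat) :
  sorted geq la -> sumn (conjugate la) = sumn la.
Proof.
move=> sorted_la; rewrite (sumn_conjpart la _ (sorted_geq_le_head la sorted_la)).
rewrite sumnE (big_nth 0%N) big_mkord size_conjugate.
by apply: eq_bigr => i _; rewrite nth_conjugate.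
Qed.

Section Kernel.

Variables (R : realType) (u q : R).
Hypotheses (q_gt1 : 1 < q) (u_lt1 : u < 1).

(* N_{u,q}(lambda) read off c = lambda', with m_i = c_i - c_(i+1); since nth past
   the end of c is 0, the last factor is (1/q)_(c_k). *)
Definition Nuq_of_conj (c : seq nat) : R :=
  infprod u q * (u ^+ (sumn c).-1 * (q ^+ head 0%N c - 1)) /
  (\prod_(i < size c) q ^+ (nth 0%N c i * nth 0%N c i) *
   \prod_(i < size c) qpoch q^-1 (nth 0%N c i - nth 0%N c i.+1)).

Lemma q_gt0 : 0 < q.
Proof. exact: lt_trans ltr01 q_gt1. Qed.

Lemma qexp_neq0 (n : nat) : q ^+ n != 0.
Proof. by rewrite expf_neq0 // gt_eqF // q_gt0. Qed.

Lemma qpoch_inv_neq0 (n : nat) : qpoch q^-1 n != 0.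
Proof.
have qV_ge0 : 0 <= q^-1 by rewrite invr_ge0 ltW // q_gt0.
have qV_lt1 : q^-1 < 1 by rewrite invf_lt1 // q_gt0.
rewrite /qpoch prodf_seq_neq0; apply/allP => j; rewrite mem_iota => /andP[j_gt0 _] /=.
by rewrite subr_eq0 eq_sym lt_eqF // exprn_ilt1 // -lt0n.
Qed.

Lemma qpochu_neq0 (n : nat) : qpochu u q n != 0.
Proof.
rewrite /qpochu prodf_seq_neq0; apply/allP => j _ /=.
rewrite subr_eq0 eq_sym lt_eqF // ltr_pdivrMr ?exprn_gt0 ?q_gt0 // mul1r.
by apply: lt_le_trans u_lt1 _; rewrite exprn_ege1 // ltW.
Qed.

Lemma qpoch0 (x : R) : qpoch x 0 = 1.
Proof. by rewrite /qpoch big_geq. Qed.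

Lemma qpochu0 : qpochu u q 0 = 1.
Proof. by rewrite /qpochu big_geq. Qed.

Lemma qpochS (x : R) (n : nat) : qpoch x n.+1 = qpoch x n * (1 - x ^+ n.+1).
Proof. by rewrite /qpoch big_nat_recr. Qed.

Lemma prod_Ktrans (c : nat -> nat) (k : nat) :
  \prod_(i < k) Ktrans u q (c i) (c i.+1) =
  u ^+ (\sum_(i < k) c i.+1) * qpoch q^-1 (c 0%N) * qpochu u q (c 0%N) /
  (qpoch q^-1 (c k) * qpochu u q (c k) *
   \prod_(i < k) q ^+ (c i.+1 * c i.+1) *
   \prod_(i < k) qpoch q^-1 (c i - c i.+1)).
Proof.
elim: k => [|k IH].
  by rewrite !big_ord0 expr0 !mulr1 mul1r mulfV // mulf_neq0 ?qpoch_inv_neq0 ?qpochu_neq0.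
have P1_neq0 : \prod_(i < k) q ^+ (c i.+1 * c i.+1) != 0.
  by apply/prodf_neq0 => i _; exact: qexp_neq0.
have P2_neq0 : \prod_(i < k) qpoch q^-1 (c i - c i.+1) != 0.
  by apply/prodf_neq0 => i _; exact: qpoch_inv_neq0.
rewrite !big_ord_recr /= IH exprD /Ktrans.
by field; rewrite P1_neq0 P2_neq0 !qpoch_inv_neq0 !qpochu_neq0 qexp_neq0.
Qed.

Lemma Qinit_qpoch (a : nat) : (0 < a)%N ->
  Qinit u q a * (qpoch q^-1 a * qpochu u q a) =
  infprod u q * u ^+ a.-1 * (q ^+ a - 1) / q ^+ (a * a).
Proof.
case: a => // a _; rewrite /Qinit qpochS mulnS addKn exprD exprVn /=.
by field; rewrite !qexp_neq0 qpoch_inv_neq0 qpochu_neq0.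
Qed.

Lemma Qinit_prod_Ktrans (c : nat -> nat) (n : nat) : (0 < c 0%N)%N -> c n = 0%N ->
  Qinit u q (c 0%N) * \prod_(i < n) Ktrans u q (c i) (c i.+1) =
  infprod u q * (u ^+ (\sum_(i < n) c i).-1 * (q ^+ c 0%N - 1)) /
  (\prod_(i < n) q ^+ (c i * c i) * \prod_(i < n) qpoch q^-1 (c i - c i.+1)).
Proof.
move=> c0_gt0 cn0.
have qcn : q ^+ (c n * c n) = 1 by rewrite cn0 expr0.
have P1_neq0 : \prod_(i < n) q ^+ (c i.+1 * c i.+1) != 0.
  by apply/prodf_neq0 => i _; exact: qexp_neq0.
have P2_neq0 : \prod_(i < n) qpoch q^-1 (c i - c i.+1) != 0.
  by apply/prodf_neq0 => i _; exact: qpoch_inv_neq0.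
rewrite prod_Ktrans cn0 qpoch0 qpochu0 !mul1r (big_ord_recl_vanish _ _ _ cn0).
rewrite (big_ord_recl_vanish _ (fun i => q ^+ (c i * c i)) _ qcn) /=.
move: (Qinit_qpoch _ c0_gt0); case: (c 0%N) c0_gt0 => // a _ Qinit_a.
rewrite addSn /= exprD.
transitivity (Qinit u q a.+1 * (qpoch q^-1 a.+1 * qpochu u q a.+1) *
  (u ^+ (\sum_(i < n) c i.+1) / (\prod_(i < n) q ^+ (c i.+1 * c i.+1) *
                                   \prod_(i < n) qpoch q^-1 (c i - c i.+1)))).
  by rewrite !mulrA; field; rewrite P1_neq0 P2_neq0.
by rewrite Qinit_a; field; rewrite P1_neq0 P2_neq0 qexp_neq0.
Qed.

Lemma chain_probE (c : seq nat) : (0 < head 0%N c)%N ->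
  chain_prob u q c = Nuq_of_conj c.
Proof.
case: c => [//|c0 t] c0_gt0.
rewrite /chain_prob /Nuq_of_conj sumnE (big_nth 0%N) big_mkord.
exact: (Qinit_prod_Ktrans (nth 0%N (c0 :: t))) (nth_default _ _).
Qed.

Lemma NuqE (la : seq nat) :
  sorted geq la -> Nuq u q la = Nuq_of_conj (conjugate la).
Proof.
move=> sorted_la.
have head_conj : head 0%N (conjugate la) = conjpart la 1 by rewrite -nth0 nth_conjugate.
rewrite /Nuq /Nuq_of_conj sumn_conjugate // head_conj size_conjugate !big_add1 !big_mkord /=.
congr (_ / (_ * _)); apply: eq_bigr => i _; rewrite !nth_conjugate //.
by rewrite mult_conjpart.
Qed.

End Kernel.

Theorem theorem3p7 (R : realType) (q u : R) (la : seq nat) :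
  1 < q -> 0 < u < 1 ->
  is_partition la -> (0 < sumn la)%N ->
  chain_prob u q (conjugate la) = Nuq u q la.
Proof.
move=> q_gt1 /andP[_ u_lt1] /andP[sorted_la pos_la] sumn_gt0.
have head_gt0 : (0 < head 0%N (conjugate la))%N.
  rewrite -nth0 nth_conjugate //.
  case: la sumn_gt0 pos_la {sorted_la} => //= a s _ /andP[a_gt0 _].
  by rewrite /conjpart /= a_gt0.
by rewrite NuqE // chain_probE.
Qed.
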